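(* Let $I\subseteq\mathbb{R}$ be an open interval (possibly unbounded), $\Sigma=I\times\mathbb{R}$, and let $F\in C^\omega(\Sigma,\mathbb{R}^2)$ (real analytic) be a non-singular map of the form $F(x,y)=\big(p_2(x)y^2+p_1(x)y+p_0(x),\,q_2(x)y^2+q_1(x)y+q_0(x)\big)$. If either $p_2(x)\neq0$ for all $x\in I$ or $q_2(x)\neq0$ for all $x\in I$, then $F$ is injective.
   Context: For $F=(P,Q)$, $d_F=P_xQ_y-P_yQ_x$ is the Jacobian determinant; $F$ is non-singular if $d_F(x,y)\neq0$ for all $(x,y)\in\Sigma$. *)

From Stdlib Require Import Reals.
From Coquelicot Require Import Coquelicot.
Open Scope R_scope.

Definition in_interval (a b : Rbar) (x : R) : Prop :=
  Rbar_lt a x /\ Rbar_lt x b.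

Definition real_analytic_on (a b : Rbar) (f : R -> R) : Prop :=
  forall x0, in_interval a b x0 ->
    exists (c : nat -> R) (r : R), 0 < r /\
      forall x, Rabs (x - x0) < r -> is_pseries c (x - x0) (f x).

Definition quad_comp (c2 c1 c0 : R -> R) (x y : R) : R :=
  c2 x * y ^ 2 + c1 x * y + c0 x.

Definition jacobian_det (P Q : R -> R -> R) (x y : R) : R :=
  Derive (fun t => P t y) x * Derive (fun t => Q x t) y
  - Derive (fun t => P x t) y * Derive (fun t => Q t y) x.

Definition nonsingular_on (a b : Rbar) (P Q : R -> R -> R) : Prop :=
  forall x y, in_interval a b x -> jacobian_det P Q x y <> 0.

Definition injective_on (a b : Rbar) (P Q : R -> R -> R) : Prop :=
  forall x1 y1 x2 y2, in_interval a b x1 -> in_interval a b x2 ->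
    P x1 y1 = P x2 y2 -> Q x1 y1 = Q x2 y2 -> x1 = x2 /\ y1 = y2.

(* For fixed x the Jacobian d_F is a cubic polynomial in y with leading
   coefficient 2 (p2' q2 - p2 q2'); since it has no real root, this coefficient
   vanishes, so (q2 / p2)' = 0 and q2 = c p2 on the interval.  Then
   Q - c P = r1(x) y + r0(x) is affine in y with r1 nowhere zero, and along a
   level curve y = (v - r0 x) / r1 x of Q - c P the derivative of x |-> P(x, y)
   is d_F / r1 <> 0.  Two points with the same image lie on one level curve, on
   which P is strictly monotone, so they coincide.  The case q2 <> 0 follows by
   exchanging P and Q.  Only differentiability of the coefficients is used. *)

From Stdlib Require Import Reals Lra.
From Coquelicot Require Import Coquelicot.
Open Scope R_scope.

Lemma CV_radius_ge_ex_pseries (c : nat -> R) (x : R) :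
  ex_pseries c x -> Rbar_le (Rabs x) (CV_radius c).
Proof.
  intros Hc. destruct (Rbar_le_lt_dec (Rabs x) (CV_radius c)) as [H|H]; [exact H|].
  exfalso. apply (CV_disk_outside c x H).
  apply is_lim_seq_ext with (u := fun n => scal (pow_n x n) (c n)).
  - intros n. rewrite pow_n_pow. apply Rmult_comm.
  - exact (ex_series_lim_0 _ Hc).
Qed.

Lemma ex_derive_real_analytic (a b : Rbar) (f : R -> R) (x : R) :
  real_analytic_on a b f -> in_interval a b x -> ex_derive f x.
Proof.
  intros Hf Hx. destruct (Hf x Hx) as (c & r & Hr & Hc).
  assert (Hrad : Rbar_lt (Rabs 0) (CV_radius c)).
  { apply Rbar_lt_le_trans with (Rabs (r / 2)).
    - rewrite Rabs_R0, Rabs_pos_eq by lra. simpl; lra.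
    - apply CV_radius_ge_ex_pseries. exists (f (x + r / 2)).
      assert (Hs := Hc (x + r / 2)).
      replace (x + r / 2 - x) with (r / 2) in Hs by ring.
      apply Hs. rewrite Rabs_pos_eq; lra. }
  apply ex_derive_ext_loc with (fun t => PSeries c (t - x)).
  - exists (mkposreal r Hr). intros t Ht. apply is_pseries_unique, Hc, Ht.
  - apply (ex_derive_comp (PSeries c) (fun t => t - x)).
    + rewrite Rminus_diag. exact (ex_derive_PSeries c 0 Hrad).
    + auto_derive; auto.
Qed.

Lemma in_interval_between (a b : Rbar) (u w z : R) :
  in_interval a b u -> in_interval a b w -> Rmin u w <= z <= Rmax u w ->
  in_interval a b z.
Proof.
  intros [Hau Hub] [Haw Hwb] Hz. split.
  - apply Rbar_lt_le_trans with (Rmin u w); [now apply Rmin_case | simpl; lra].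
  - apply Rbar_le_lt_trans with (Rmax u w); [simpl; lra | now apply Rmax_case].
Qed.

Lemma MVT_interval (a b : Rbar) (f df : R -> R) (u w : R) :
  (forall x, in_interval a b x -> is_derive f x (df x)) ->
  in_interval a b u -> in_interval a b w ->
  exists z, in_interval a b z /\ f w - f u = df z * (w - u).
Proof.
  intros Hf Hu Hw.
  assert (Hbetween : forall z, Rmin u w <= z <= Rmax u w -> in_interval a b z)
    by (intros z; apply in_interval_between; assumption).
  destruct (MVT_gen f u w df) as (z & Hz & E).
  - intros x Hx. apply Hf, Hbetween. lra.
  - intros x Hx. apply continuity_pt_filterlim, (ex_derive_continuous f).
    exists (df x). apply Hf, Hbetween, Hx.
  - exists z. split; [apply Hbetween, Hz | exact E].
Qed.

Lemma is_derive_0_const_on_interval (a b : Rbar) (f : R -> R) (u w : R) :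
  (forall x, in_interval a b x -> is_derive f x 0) ->
  in_interval a b u -> in_interval a b w -> f u = f w.
Proof.
  intros Hf Hu Hw.
  destruct (MVT_interval a b f (fun _ => 0) u w Hf Hu Hw) as (z & _ & E). lra.
Qed.

Lemma is_derive_neq0_injective_on_interval (a b : Rbar) (f df : R -> R) (u w : R) :
  (forall x, in_interval a b x -> is_derive f x (df x)) ->
  (forall x, in_interval a b x -> df x <> 0) ->
  in_interval a b u -> in_interval a b w -> f u = f w -> u = w.
Proof.
  intros Hf Hdf Hu Hw Efuw.
  destruct (MVT_interval a b f df u w Hf Hu Hw) as (z & Hz & E).
  rewrite Efuw, Rminus_diag in E.
  destruct (Rmult_integral _ _ (eq_sym E)) as [H|H].
  - contradiction (Hdf z Hz).
  - lra.
Qed.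

Lemma monic_cubic_root (b c d : R) : exists y, y ^ 3 + b * y ^ 2 + c * y + d = 0.
Proof.
  set (M := 1 + Rabs b + Rabs c + Rabs d).
  set (f := fun y => y ^ 3 + b * y ^ 2 + c * y + d).
  assert (HM : 1 <= M) by (generalize (Rabs_pos b) (Rabs_pos c) (Rabs_pos d); unfold M; lra).
  assert (Hdominated : forall y, Rabs y = M -> Rabs (b * y ^ 2 + c * y + d) < M ^ 3).
  { intros y Hy.
    apply Rle_lt_trans with (Rabs b * M ^ 2 + Rabs c * M + Rabs d).
    - eapply Rle_trans; [apply Rabs_triang|].
      apply Rplus_le_compat_r. eapply Rle_trans; [apply Rabs_triang|].
      rewrite !Rabs_mult, <- RPow_abs, Hy. lra.
    - assert (HM2 : M <= M ^ 2) by nra.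
      replace (M ^ 3) with ((1 + Rabs b + Rabs c + Rabs d) * M ^ 2) by (unfold M; ring).
      generalize (Rabs_pos c) (Rabs_pos d). nra. }
  assert (Hpos : 0 < f M).
  { destruct (Rabs_def2 _ _ (Hdominated M (Rabs_pos_eq M ltac:(lra)))).
    unfold f. lra. }
  assert (Hneg : f (- M) < 0).
  { assert (HaM : Rabs (- M) = M) by (rewrite Rabs_Ropp; apply Rabs_pos_eq; lra).
    destruct (Rabs_def2 _ _ (Hdominated (- M) HaM)).
    unfold f. nra. }
  destruct (IVT f (- M) M) as (y & _ & Hy).
  - intros x. unfold f. reg.
  - lra.
  - exact Hneg.
  - exact Hpos.
  - exists y. exact Hy.
Qed.

Lemma cubic_root (A B C D : R) :
  A <> 0 -> exists y, A * y ^ 3 + B * y ^ 2 + C * y + D = 0.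
Proof.
  intros HA. destruct (monic_cubic_root (B / A) (C / A) (D / A)) as [y Hy].
  exists y.
  replace (A * y ^ 3 + B * y ^ 2 + C * y + D)
    with (A * (y ^ 3 + B / A * y ^ 2 + C / A * y + D / A)) by (field; exact HA).
  rewrite Hy. ring.
Qed.

Lemma is_derive_quad_comp_along (c2 c1 c0 Y : R -> R) (d2 d1 d0 dY x : R) :
  is_derive c2 x d2 -> is_derive c1 x d1 -> is_derive c0 x d0 -> is_derive Y x dY ->
  is_derive (fun t => quad_comp c2 c1 c0 t (Y t)) x
    (d2 * Y x ^ 2 + d1 * Y x + d0 + (2 * c2 x * Y x + c1 x) * dY).
Proof.
  intros H2 H1 H0 HY. unfold quad_comp. auto_derive.
  - repeat split; eexists; eassumption.
  - repeat erewrite is_derive_unique by eassumption. ring.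
Qed.

Lemma Derive_quad_comp_l (c2 c1 c0 : R -> R) (x y : R) :
  ex_derive c2 x -> ex_derive c1 x -> ex_derive c0 x ->
  Derive (fun t => quad_comp c2 c1 c0 t y) x
    = Derive c2 x * y ^ 2 + Derive c1 x * y + Derive c0 x.
Proof.
  intros H2 H1 H0. apply is_derive_unique.
  replace (Derive c2 x * y ^ 2 + Derive c1 x * y + Derive c0 x) with
    (Derive c2 x * y ^ 2 + Derive c1 x * y + Derive c0 x + (2 * c2 x * y + c1 x) * 0)
    by ring.
  exact (is_derive_quad_comp_along c2 c1 c0 (fun _ => y) _ _ _ 0 x
    (Derive_correct _ _ H2) (Derive_correct _ _ H1) (Derive_correct _ _ H0)
    (is_derive_const y x)).
Qed.

Lemma Derive_quad_comp_r (c2 c1 c0 : R -> R) (x y : R) :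
  Derive (fun t => quad_comp c2 c1 c0 x t) y = 2 * c2 x * y + c1 x.
Proof. apply is_derive_unique. unfold quad_comp. auto_derive; [exact I | ring]. Qed.

Lemma jacobian_det_quad_comp (p2 p1 p0 q2 q1 q0 : R -> R) (x y : R) :
  ex_derive p2 x -> ex_derive p1 x -> ex_derive p0 x ->
  ex_derive q2 x -> ex_derive q1 x -> ex_derive q0 x ->
  jacobian_det (quad_comp p2 p1 p0) (quad_comp q2 q1 q0) x y =
    (Derive p2 x * y ^ 2 + Derive p1 x * y + Derive p0 x) * (2 * q2 x * y + q1 x)
    - (2 * p2 x * y + p1 x) * (Derive q2 x * y ^ 2 + Derive q1 x * y + Derive q0 x).
Proof.
  intros. unfold jacobian_det.
  rewrite !Derive_quad_comp_r, !Derive_quad_comp_l by assumption.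
  reflexivity.
Qed.

Lemma jacobian_det_swap (P Q : R -> R -> R) (x y : R) :
  jacobian_det Q P x y = - jacobian_det P Q x y.
Proof. unfold jacobian_det. ring. Qed.

Section LeadingCoefficientNonvanishing.

Variables (a b : Rbar) (p2 p1 p0 q2 q1 q0 : R -> R).
Hypotheses
  (Dp2 : forall x, in_interval a b x -> ex_derive p2 x)
  (Dp1 : forall x, in_interval a b x -> ex_derive p1 x)
  (Dp0 : forall x, in_interval a b x -> ex_derive p0 x)
  (Dq2 : forall x, in_interval a b x -> ex_derive q2 x)
  (Dq1 : forall x, in_interval a b x -> ex_derive q1 x)
  (Dq0 : forall x, in_interval a b x -> ex_derive q0 x).

Let P := quad_comp p2 p1 p0.
Let Q := quad_comp q2 q1 q0.

Hypothesis nonsingular_PQ : nonsingular_on a b P Q.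

Let jacobian_det_PQ x y : in_interval a b x ->
  jacobian_det P Q x y =
    (Derive p2 x * y ^ 2 + Derive p1 x * y + Derive p0 x) * (2 * q2 x * y + q1 x)
    - (2 * p2 x * y + p1 x) * (Derive q2 x * y ^ 2 + Derive q1 x * y + Derive q0 x).
Proof. intros Hx. apply jacobian_det_quad_comp; auto. Qed.

Lemma lead_wronskian_eq0 x : in_interval a b x ->
  Derive p2 x * q2 x = p2 x * Derive q2 x.
Proof.
  intros Hx.
  destruct (Req_dec (Derive p2 x * q2 x) (p2 x * Derive q2 x)) as [E|E]; [exact E|].
  exfalso.
  destruct (cubic_root (2 * (Derive p2 x * q2 x - p2 x * Derive q2 x))
     (2 * Derive p1 x * q2 x + Derive p2 x * q1 x - 2 * p2 x * Derive q1 x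
        - p1 x * Derive q2 x)
     (2 * Derive p0 x * q2 x + Derive p1 x * q1 x - 2 * p2 x * Derive q0 x
        - p1 x * Derive q1 x)
     (Derive p0 x * q1 x - p1 x * Derive q0 x)) as [y Hy].
  { intros H. apply E. lra. }
  apply (nonsingular_PQ x y Hx). rewrite jacobian_det_PQ by exact Hx.
  rewrite <- Hy. ring.
Qed.

Hypothesis p2_neq0 : forall x, in_interval a b x -> p2 x <> 0.

Lemma lead_ratio_const u w : in_interval a b u -> in_interval a b w ->
  q2 u / p2 u = q2 w / p2 w.
Proof.
  apply (is_derive_0_const_on_interval a b (fun x => q2 x / p2 x)).
  intros x Hx.
  replace 0 with ((Derive q2 x * p2 x - q2 x * Derive p2 x) / p2 x ^ 2).
  - apply is_derive_div; [apply Derive_correct, Dq2, Hx |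
      apply Derive_correct, Dp2, Hx | apply p2_neq0, Hx].
  - assert (W := lead_wronskian_eq0 x Hx).
    replace (Derive q2 x * p2 x - q2 x * Derive p2 x) with 0 by lra.
    unfold Rdiv. ring.
Qed.

Section ProportionalLeadingCoefficients.

Variable c : R.
Hypothesis q2_prop : forall x, in_interval a b x -> q2 x = c * p2 x.

Let r1 x := q1 x - c * p1 x.
Let r0 x := q0 x - c * p0 x.

Lemma Derive_q2_prop x : in_interval a b x -> Derive q2 x = c * Derive p2 x.
Proof.
  intros Hx. apply (Rmult_eq_reg_l (p2 x)); [|exact (p2_neq0 x Hx)].
  rewrite <- lead_wronskian_eq0, q2_prop by exact Hx. ring.
Qed.

Lemma Q_sub_P_affine x y : in_interval a b x -> Q x y - c * P x y = r1 x * y + r0 x.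
Proof. intros Hx. unfold Q, P, quad_comp, r1, r0. rewrite q2_prop by exact Hx. ring. Qed.

(* At the critical point y = - p1 / (2 p2) of P(x, .) the Jacobian is P_x r1. *)
Lemma r1_neq0 x : in_interval a b x -> r1 x <> 0.
Proof.
  intros Hx Hr. apply (nonsingular_PQ x (- p1 x / (2 * p2 x)) Hx).
  rewrite jacobian_det_PQ, q2_prop, Derive_q2_prop by exact Hx.
  unfold r1 in Hr. replace (q1 x) with (c * p1 x) by lra.
  field. exact (p2_neq0 x Hx).
Qed.

Lemma is_derive_P_along_level (v : R) x : in_interval a b x ->
  is_derive (fun t => P t ((v - r0 t) / r1 t)) x
    (jacobian_det P Q x ((v - r0 x) / r1 x) / r1 x).
Proof.
  intros Hx.
  assert (Dr1 : is_derive r1 x (Derive q1 x - c * Derive p1 x)).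
  { apply (is_derive_minus q1 (fun t => c * p1 t)), is_derive_scal;
      apply Derive_correct; auto. }
  assert (Dr0 : is_derive r0 x (Derive q0 x - c * Derive p0 x)).
  { apply (is_derive_minus q0 (fun t => c * p0 t)), is_derive_scal;
      apply Derive_correct; auto. }
  assert (DY := is_derive_div (fun t => v - r0 t) r1 x _ _
    (is_derive_minus _ _ _ _ _ (is_derive_const v x) Dr0) Dr1 (r1_neq0 x Hx)).
  assert (DP := is_derive_quad_comp_along p2 p1 p0 (fun t => (v - r0 t) / r1 t)
    _ _ _ _ x (Derive_correct _ _ (Dp2 x Hx)) (Derive_correct _ _ (Dp1 x Hx))
    (Derive_correct _ _ (Dp0 x Hx)) DY).
  lazymatch type of DP with is_derive _ _ ?l =>
    replace (jacobian_det P Q x ((v - r0 x) / r1 x) / r1 x) with l end.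
  - exact DP.
  - rewrite jacobian_det_PQ, q2_prop, Derive_q2_prop by exact Hx.
    unfold r1, r0, minus, plus, opp, zero. simpl. field. exact (r1_neq0 x Hx).
Qed.

Lemma injective_on_PQ : injective_on a b P Q.
Proof.
  intros x1 y1 x2 y2 Hx1 Hx2 EP EQ.
  set (v := r1 x1 * y1 + r0 x1).
  set (Y := fun x => (v - r0 x) / r1 x).
  assert (Ev : v = r1 x2 * y2 + r0 x2).
  { unfold v. rewrite <- !Q_sub_P_affine by assumption. rewrite EP, EQ. reflexivity. }
  assert (HY1 : Y x1 = y1) by (unfold Y, v; field; exact (r1_neq0 x1 Hx1)).
  assert (HY2 : Y x2 = y2) by (unfold Y; rewrite Ev; field; exact (r1_neq0 x2 Hx2)).
  assert (E12 : x1 = x2).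
  { apply (is_derive_neq0_injective_on_interval a b (fun t => P t (Y t))
      (fun t => jacobian_det P Q t (Y t) / r1 t)); try assumption.
    - intros x Hx. apply is_derive_P_along_level, Hx.
    - intros x Hx. apply Rmult_integral_contrapositive_currified.
      + apply nonsingular_PQ, Hx.
      + apply Rinv_neq_0_compat, r1_neq0, Hx.
    - rewrite HY1, HY2. exact EP. }
  subst x2. split; [reflexivity|]. rewrite <- HY1, <- HY2. reflexivity.
Qed.

End ProportionalLeadingCoefficients.

Lemma injective_on_lead_neq0 : injective_on a b P Q.
Proof.
  intros x1 y1 x2 y2 Hx1 Hx2.
  apply (injective_on_PQ (q2 x1 / p2 x1)); try assumption.
  intros x Hx. rewrite (lead_ratio_const x1 x Hx1 Hx). field. exact (p2_neq0 x Hx).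
Qed.

End LeadingCoefficientNonvanishing.

Theorem corollary1 (a b : Rbar) (p2 p1 p0 q2 q1 q0 : R -> R) :
  Rbar_lt a b ->
  real_analytic_on a b p2 -> real_analytic_on a b p1 -> real_analytic_on a b p0 ->
  real_analytic_on a b q2 -> real_analytic_on a b q1 -> real_analytic_on a b q0 ->
  nonsingular_on a b (quad_comp p2 p1 p0) (quad_comp q2 q1 q0) ->
  ((forall x, in_interval a b x -> p2 x <> 0) \/
   (forall x, in_interval a b x -> q2 x <> 0)) ->
  injective_on a b (quad_comp p2 p1 p0) (quad_comp q2 q1 q0).
Proof.
  intros _ Ap2 Ap1 Ap0 Aq2 Aq1 Aq0 Hns [Hp2 | Hq2].
  - apply injective_on_lead_neq0; try assumption;
      intros x; apply ex_derive_real_analytic; assumption.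
  - intros x1 y1 x2 y2 Hx1 Hx2 EP EQ.
    apply (injective_on_lead_neq0 a b q2 q1 q0 p2 p1 p0); try assumption;
      try (intros x; apply ex_derive_real_analytic; assumption).
    intros x y Hx. rewrite jacobian_det_swap. apply Ropp_neq_0_compat, Hns, Hx.
Qed.
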